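(* Let $G$ be a weakly-reversible chemical reaction network in $s$ species that is not catalytic. Then $V_{\mathbb{R}}(\mathcal{E}_G)\cap\mathbb{R}^s_{>0}$ is dense, in the Euclidean topology, in $V_{\mathbb{R}}(\mathcal{E}_G)\cap\mathbb{R}^s_{\ge0}$.
   Context: A chemical reaction network (CRN) consists of positive integers $s,n$, a finite directed graph $G$ with vertex set $\{1,\dots,n\}$ and edge set $E(G)$, and an injective labeling of vertex $i$ by a monic monomial $\psi_i=\prod_{j=1}^s x_j^{y_{ij}}$. $G$ is weakly-reversible iff each connected component is strongly connected. The associated event-system $\mathcal{E}_G$ is the set of binomials $\psi_i-\psi_j$, one for each pair $\{i,j\}$ with $(i,j)\in E(G)$ or $(j,i)\in E(G)$; $V_{\mathbb{R}}(\mathcal{E}_G)$ is its real zero set in $\mathbb{R}^s$. The event-graph $\overline{G}$ has as vertices all monic monomials in $x_1,\dots,x_s$, with an edge $(N\psi_i,N\psi_j)$ for each $(i,j)\in E(G)$ and each monic monomial $N$. A weakly-reversible CRN is catalytic iff there exist monic monomials $M,N$ path-connected in $\overline{G}$ such that $M/\gcd(M,N)$ and $N/\gcd(M,N)$ are not path-connected in $\overline{G}$. *)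

From HB Require Import structures.
From mathcomp Require Import all_boot all_order all_algebra.
From mathcomp Require Import all_classical all_reals all_analysis.
From Stdlib Require Import Relations.
Set Implicit Arguments. Unset Strict Implicit. Unset Printing Implicit Defensive.
Import Order.TTheory GRing.Theory Num.Theory.
Import numFieldNormedType.Exports.
Local Open Scope ring_scope.

(* A CRN: vertices 'I_n, directed edge relation e : rel 'I_n, and labels
   y : 'I_n -> {ffun 'I_s -> nat}, the exponent vector of the monic monomial
   psi_i = prod_j x_j ^ (y i j).  Monic monomials in x_1..x_s are identified
   with their exponent vectors {ffun 'I_s -> nat}. *)

Definition sym_edge (n : nat) (e : rel 'I_n) : rel 'I_n :=
  fun u v => e u v || e v u.

Definition weakly_reversible (n : nat) (e : rel 'I_n) : Prop :=
  forall u v : 'I_n, connect (sym_edge e) u v -> connect e u v.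

Definition mono_mul (s : nat) (M N : {ffun 'I_s -> nat}) : {ffun 'I_s -> nat} :=
  [ffun k => (M k + N k)%N].

Definition mono_div_gcd (s : nat) (M N : {ffun 'I_s -> nat}) : {ffun 'I_s -> nat} :=
  [ffun k => (M k - minn (M k) (N k))%N].

Definition event_edge (s n : nat) (e : rel 'I_n) (y : 'I_n -> {ffun 'I_s -> nat})
    (M M' : {ffun 'I_s -> nat}) : Prop :=
  exists (i j : 'I_n) (N : {ffun 'I_s -> nat}),
    e i j /\ M = mono_mul N (y i) /\ M' = mono_mul N (y j).

Definition event_connected (s n : nat) (e : rel 'I_n) (y : 'I_n -> {ffun 'I_s -> nat}) :
    relation {ffun 'I_s -> nat} :=
  clos_refl_trans _ (fun M M' => event_edge e y M M' \/ event_edge e y M' M).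

Definition catalytic (s n : nat) (e : rel 'I_n) (y : 'I_n -> {ffun 'I_s -> nat}) : Prop :=
  exists M N : {ffun 'I_s -> nat},
    event_connected e y M N /\
    ~ event_connected e y (mono_div_gcd M N) (mono_div_gcd N M).

Definition mono_eval (R : realType) (s : nat) (a : {ffun 'I_s -> nat}) (x : 'rV[R]_s) : R :=
  \prod_(k < s) (x ord0 k) ^+ (a k).

Definition event_variety (R : realType) (s n : nat) (e : rel 'I_n)
    (y : 'I_n -> {ffun 'I_s -> nat}) : set 'rV[R]_s :=
  [set x | forall i j : 'I_n, (e i j || e j i) -> mono_eval (y i) x = mono_eval (y j) x].

Definition pos_orthant (R : realType) (s : nat) : set 'rV[R]_s :=
  [set x | forall k : 'I_s, (0 < x ord0 k)%R].

Definition nonneg_orthant (R : realType) (s : nat) : set 'rV[R]_s :=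
  [set x | forall k : 'I_s, (0 <= x ord0 k)%R].

(* Let x be a nonnegative point of the variety and Z the set of its zero coordinates.
   Non-catalyticity makes connectivity in the event graph cancellative, so that M and N
   are connected as soon as M - N is an integer combination of reaction vectors
   y_i - y_j.  Evaluating the resulting binomial identities at x shows that no such
   combination is nonpositive and nonzero on Z (one side would vanish at x, the other
   not), and that every combination vanishing on Z is orthogonal to (ln x_k)_{k not in Z}.
   Fourier-Motzkin elimination, whose refutations are integer combinations, dualizes
   these facts into vectors w and u orthogonal to all reaction vectors, with w > 0 on Z,
   w = 0 off Z and u_k = ln x_k off Z.  The positive points exp(u - N w) of the variety
   then tend to x. *)

From HB Require Import structures.
From mathcomp Require Import all_boot all_order all_algebra.
From mathcomp Require Import all_classical all_reals all_analysis.
From mathcomp Require Import zify ring lra.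
From Stdlib Require Import Relations.
Import Order.TTheory GRing.Theory Num.Theory.
Import numFieldNormedType.Exports.
Set Implicit Arguments. Unset Strict Implicit. Unset Printing Implicit Defensive.
Local Open Scope classical_set_scope.
Local Open Scope ring_scope.

Lemma has_flatten (T : Type) (a : pred T) (ss : seq (seq T)) :
  has a (flatten ss) = has (has a) ss.
Proof. by elim: ss => //= s ss IH; rewrite has_cat IH. Qed.

Section FourierMotzkin.
Variable F : realFieldType.

(* Rows are indexed by [nat] so that eliminating the last unknown keeps their type. *)
Definition zdot (d : nat) (r : nat -> int) (u : nat -> F) : F :=
  \sum_(k < d) (r k)%:~R * u k.

Definition ineq_sat (strict : bool) (a : F) : bool := if strict then 0 < a else 0 <= a.

(* A list [l] of rows (with multiplicity) summing to zero yields the consequence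
   [sum cst >= 0] (strict if some row is); [l] refutes the system when this fails. *)
Definition refuting (X : Type) (strict : X -> bool) (cst : X -> F) (l : seq X) : bool :=
  if has strict l then \sum_(x <- l) cst x <= 0 else \sum_(x <- l) cst x < 0.

Lemma ineq_satW b a : ineq_sat b a -> 0 <= a.
Proof. by case: b => //= /ltW. Qed.

Lemma gt0_ineq_sat b a : 0 < a -> ineq_sat b a.
Proof. by case: b => //= /ltW. Qed.

Lemma ineq_sat_pmull b c a : 0 < c -> ineq_sat b (c * a) = ineq_sat b a.
Proof. by case: b => /= c_gt0; rewrite ?pmulr_rgt0 ?pmulr_rge0. Qed.

Lemma refuting1 (X : Type) (strict : X -> bool) (cst : X -> F) x :
  refuting strict cst [:: x] = ~~ ineq_sat (strict x) (cst x).
Proof. by rewrite /refuting /= big_seq1 orbF; case: (strict x); rewrite -?ltNge -?leNgt. Qed.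

Lemma refuting0 (X : Type) (strict : X -> bool) (l : seq X) :
  refuting strict (fun=> 0 : F) l = has strict l.
Proof. by rewrite /refuting big1 // ltxx lexx; case: (has strict l). Qed.

Lemma seq_argmax (X : eqType) (f : X -> F) (l : seq X) : l != [::] ->
  exists2 p, p \in l & forall q, q \in l -> f q <= f p.
Proof.
elim: l => // a l IH _; case: (eqVneq l [::]) => [->|/IH [p pl fp_max]].
  by exists a; rewrite ?mem_head // => q; rewrite inE => /eqP ->.
have [fap|fpa] := leP (f a) (f p).
  exists p => [|q]; first by rewrite inE pl orbT.
  by rewrite inE => /orP [/eqP -> // | /fp_max].
exists a => [|q]; first exact: mem_head.
by rewrite inE => /orP [/eqP -> // | /fp_max/le_trans]; apply; apply: ltW.
Qed.

Lemma exists_between (X : eqType) (lo up : seq X) (L U : X -> F) (sl su : X -> bool) :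
  (forall p q, p \in lo -> q \in up -> ineq_sat (sl p || su q) (U q - L p)) ->
  exists t, (forall p, p \in lo -> ineq_sat (sl p) (t - L p)) /\
            (forall q, q \in up -> ineq_sat (su q) (U q - t)).
Proof.
move=> LU; have [->|lo0] := eqVneq lo [::].
  have [->|up0] := eqVneq up [::]; first by exists 0.
  have [q0 _ q0_min] := seq_argmax (fun q => - U q) up0.
  exists (U q0 - 1); split => // q /q0_min; rewrite lerN2 => Uq; apply: gt0_ineq_sat; lra.
have [p0 p0lo p0_max] := seq_argmax L lo0.
have [->|up0] := eqVneq up [::].
  by exists (L p0 + 1); split => // p /p0_max Lp; apply: gt0_ineq_sat; lra.
have [q0 q0up q0_min] := seq_argmax (fun q => - U q) up0.
have := ineq_satW (LU _ _ p0lo q0up) => L0U0.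
exists ((L p0 + U q0) / 2); split => [p plo|q qup].
  by have := p0_max _ plo; have := LU _ _ plo q0up; case: (sl p) => /=; lra.
have := q0_min _ qup; rewrite lerN2; have := LU _ _ p0lo qup.
by case: (su q); rewrite ?orbT /=; lra.
Qed.

Lemma solve_one_variable (X : eqType) (sys : seq X) (a : X -> F) (c : X -> int)
    (strict : X -> bool) :
  (forall p q, p \in sys -> q \in sys -> 0 < c p -> c q < 0 ->
     ineq_sat (strict p || strict q) (a p *+ absz (c q) + a q *+ absz (c p))) ->
  exists t, forall x, x \in sys -> c x != 0 -> ineq_sat (strict x) (a x + (c x)%:~R * t).
Proof.
move=> comb.
pose L x := - a x / (c x)%:~R; pose U x := a x / - (c x)%:~R.
have [|t [tL tU]] := @exists_between _ [seq x <- sys | 0 < c x] [seq x <- sys | c x < 0]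
    L U strict strict.
  move=> p q; rewrite !mem_filter => /andP [cp psys] /andP [cq qsys].
  have cpF : ((c p)%:~R : F) != 0 by rewrite intr_eq0 gt_eqF.
  have cqF : ((c q)%:~R : F) != 0 by rewrite intr_eq0 lt_eqF.
  rewrite -(@ineq_sat_pmull _ ((c p)%:~R * - (c q)%:~R)); last first.
    by rewrite mulr_gt0 ?oppr_gt0 ?ltr0z ?ltrz0.
  have abs_cq : (absz (c q))%:R = - (c q)%:~R :> F by rewrite pmulrn ltz0_abs // intrN.
  have abs_cp : (absz (c p))%:R = (c p)%:~R :> F by rewrite pmulrn gtz0_abs.
  have -> : (c p)%:~R * - (c q)%:~R * (U q - L p) = a p *+ absz (c q) + a q *+ absz (c p).
    rewrite -[a p *+ _]mulr_natr -[a q *+ _]mulr_natr abs_cq abs_cp /L /U.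
    by field; apply/andP.
  exact: comb.
exists t => x xsys; rewrite neq_lt => /orP [cx|cx].
  have cxF : ((c x)%:~R : F) != 0 by rewrite intr_eq0 lt_eqF.
  have := tU x; rewrite mem_filter cx xsys => /(_ isT).
  rewrite -(@ineq_sat_pmull _ (- (c x)%:~R)) ?oppr_gt0 ?ltrz0 // /U.
  by congr ineq_sat; field.
have cxF : ((c x)%:~R : F) != 0 by rewrite intr_eq0 gt_eqF.
have := tL x; rewrite mem_filter cx xsys => /(_ isT).
rewrite -(@ineq_sat_pmull _ (c x)%:~R) ?ltr0z // /L.
by congr ineq_sat; field.
Qed.

Section Elimination.
Variables (d : nat) (X : eqType) (row : X -> nat -> int) (cst : X -> F).
Variables (strict : X -> bool) (sys : seq X).

(* Eliminating the unknown [d]: rows not involving it are kept, and each pair of rows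
   where it has opposite signs is replaced by the positive combination cancelling it. *)
Definition elim_row (z : X + X * X) : nat -> int :=
  match z with
  | inl x => row x
  | inr (p, q) => fun k => row p k *+ absz (row q d) + row q k *+ absz (row p d)
  end.

Definition elim_cst (z : X + X * X) : F :=
  match z with
  | inl x => cst x
  | inr (p, q) => cst p *+ absz (row q d) + cst q *+ absz (row p d)
  end.

Definition elim_strict (z : X + X * X) : bool :=
  match z with inl x => strict x | inr (p, q) => strict p || strict q end.

Definition elim_sys : seq (X + X * X) :=
  [seq inl x | x <- sys & row x d == 0] ++
  [seq inr (p, q) | p <- [seq x <- sys | 0 < row x d], q <- [seq x <- sys | row x d < 0]].

Lemma mem_elim_sys z : z \in elim_sys ->
  (exists2 x, (x \in sys) && (row x d == 0) & z = inl x) \/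
  (exists p q, [/\ p \in sys, q \in sys, 0 < row p d, row q d < 0 & z = inr (p, q)]).
Proof.
rewrite mem_cat => /orP [/mapP [x + ->]|/allpairsP [[p q] [/= + + ->]]].
  by rewrite mem_filter andbC; left; exists x.
by rewrite !mem_filter => /andP [? ?] /andP [? ?]; right; exists p, q.
Qed.

(* The rows of the original system summing to the eliminated row [z]. *)
Definition elim_expand (z : X + X * X) : seq X :=
  match z with
  | inl x => [:: x]
  | inr (p, q) => nseq (absz (row q d)) p ++ nseq (absz (row p d)) q
  end.

Lemma sum_elim_expand (V : nmodType) (g : X -> V) p q :
  \sum_(x <- elim_expand (inr (p, q))) g x = g p *+ absz (row q d) + g q *+ absz (row p d).
Proof. by rewrite big_cat /= !big_nseq !iter_addr_0. Qed.

Lemma elim_expand_row z k : \sum_(x <- elim_expand z) row x k = elim_row z k.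
Proof. by case: z => [x|[p q]]; rewrite ?big_seq1 ?sum_elim_expand. Qed.

Lemma elim_expand_cst z : \sum_(x <- elim_expand z) cst x = elim_cst z.
Proof. by case: z => [x|[p q]]; rewrite ?big_seq1 ?sum_elim_expand. Qed.

Lemma elim_expand_pivot z : z \in elim_sys -> \sum_(x <- elim_expand z) row x d = 0.
Proof.
move=> /mem_elim_sys [[x /andP [_ /eqP x0] ->]|[p [q [_ _ cp cq ->]]]].
  by rewrite big_seq1.
rewrite sum_elim_expand !pmulrn !mulrzz ltz0_abs // gtz0_abs //.
by rewrite mulrN mulrC addNr.
Qed.

Lemma elim_expand_sub z : z \in elim_sys -> {subset elim_expand z <= sys}.
Proof.
move=> /mem_elim_sys [[x /andP [xsys _] ->] w|[p [q [psys qsys _ _ ->]]] w].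
  by rewrite inE => /eqP ->.
by rewrite mem_cat !mem_nseq => /orP [] /andP [_ /eqP ->].
Qed.

Lemma has_elim_expand z : z \in elim_sys -> has strict (elim_expand z) = elim_strict z.
Proof.
move=> /mem_elim_sys [[x _ ->]|[p [q [_ _ cp cq ->]]]] /=; first by rewrite orbF.
by rewrite has_cat !has_nseq !absz_gt0 (gt_eqF cp) (lt_eqF cq).
Qed.

Lemma elim_refuting l' :
  {subset l' <= elim_sys} -> (forall k, (k < d)%N -> \sum_(z <- l') elim_row z k = 0) ->
  refuting elim_strict elim_cst l' ->
  exists l, [/\ {subset l <= sys}, forall k, (k < d.+1)%N -> \sum_(x <- l) row x k = 0
              & refuting strict cst l].
Proof.
move=> l'sub l'sum l'ref; exists (flatten (map elim_expand l')).
have sumE (V : nmodType) (g : X -> V) :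
    \sum_(x <- flatten (map elim_expand l')) g x = \sum_(z <- l') \sum_(x <- elim_expand z) g x.
  by rewrite big_flatten /= big_map.
split.
- move=> x /flattenP [_ /mapP [z /l'sub zsys ->]]; exact: elim_expand_sub.
- move=> k; rewrite ltnS leq_eqVlt sumE => /orP [/eqP ->|kd].
    by rewrite big_seq big1 // => z /l'sub; apply: elim_expand_pivot.
  by rewrite -[RHS](l'sum k kd); apply: eq_bigr => z _; rewrite elim_expand_row.
rewrite /refuting has_flatten has_map (eq_in_has (fun z zl => has_elim_expand (l'sub z zl))).
by rewrite sumE; under eq_bigr do rewrite elim_expand_cst.
Qed.

Lemma elim_feasible (u' : nat -> F) :
  (forall z, z \in elim_sys -> ineq_sat (elim_strict z) (zdot d (elim_row z) u' + elim_cst z)) ->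
  exists u, forall x, x \in sys -> ineq_sat (strict x) (zdot d.+1 (row x) u + cst x).
Proof.
move=> u'sat; pose a x := zdot d (row x) u' + cst x.
have [|t tsat] := @solve_one_variable _ sys a (fun x => row x d) strict.
  move=> p q psys qsys cp cq.
  have -> : a p *+ absz (row q d) + a q *+ absz (row p d) =
      zdot d (elim_row (inr (p, q))) u' + elim_cst (inr (p, q)).
    rewrite /a !mulrnDl addrACA /zdot -!sumrMnl -big_split; congr (_ + _).
    by apply: eq_bigr => k _; rewrite /= intrD !rmorphMn mulrDl !mulrnAl.
  apply: u'sat; rewrite mem_cat; apply/orP; right.
  by apply/allpairsP; exists (p, q); rewrite !mem_filter cp cq psys qsys.
exists (fun k => if k == d then t else u' k) => x xsys.
have -> : zdot d.+1 (row x) (fun k => if k == d then t else u' k) + cst x =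
    a x + (row x d)%:~R * t.
  rewrite /a /zdot big_ord_recr /= eqxx addrAC; congr (_ + _ + _).
  by apply: eq_bigr => k _; rewrite ltn_eqF.
have [x0|] := eqVneq (row x d) 0; last exact: tsat.
have /u'sat : inl x \in elim_sys by rewrite mem_cat map_f // mem_filter x0 eqxx.
by rewrite x0 mul0r addr0.
Qed.

End Elimination.

Theorem fourier_motzkin d (X : eqType) (row : X -> nat -> int) (cst : X -> F)
    (strict : X -> bool) (sys : seq X) :
  (exists u, forall x, x \in sys -> ineq_sat (strict x) (zdot d (row x) u + cst x)) \/
  (exists l, [/\ {subset l <= sys}, forall k, (k < d)%N -> \sum_(x <- l) row x k = 0
              & refuting strict cst l]).
Proof.
elim: d X row cst strict sys => [|d IH] X row cst strict sys.
  have [sat|/allPn [x xsys xunsat]] := boolP (all (fun x => ineq_sat (strict x) (cst x)) sys).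
    by left; exists (fun=> 0) => x /(allP sat); rewrite /zdot big_ord0 add0r.
  by right; exists [:: x]; split => // [z|]; rewrite ?inE ?refuting1 // => /eqP ->.
have [[u' /elim_feasible]|[l' [sub' sum' ref']]] :=
  IH _ (elim_row d row) (elim_cst d row cst) (elim_strict strict) (elim_sys d row sys).
  by left.
by right; apply: elim_refuting sub' sum' ref'.
Qed.

Corollary linear_alternative d (X : eqType) (row : X -> 'I_d -> int) (cst : X -> F)
    (strict : X -> bool) (sys : seq X) :
  (exists u : 'I_d -> F,
     forall x, x \in sys -> ineq_sat (strict x) (\sum_i (row x i)%:~R * u i + cst x)) \/
  (exists l, [/\ {subset l <= sys}, forall i, \sum_(x <- l) row x i = 0 & refuting strict cst l]).
Proof.
pose r x k := if insub k is Some i then row x i else 0.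
have rE x (i : 'I_d) : r x i = row x i by rewrite /r valK.
have [[u usat]|[l [lsub lsum lref]]] := fourier_motzkin d r cst strict sys.
  left; exists (fun i => u i) => x /usat; congr (ineq_sat _ (_ + _)).
  by apply: eq_bigr => i _; rewrite rE.
right; exists l; split => // i; rewrite -[RHS](lsum i (ltn_ord i)).
by apply: eq_bigr => x _; rewrite rE.
Qed.

End FourierMotzkin.

Section EventGraph.
Variables (R : realType) (s n : nat) (e : rel 'I_n) (y : 'I_n -> {ffun 'I_s -> nat}).
Local Notation connected := (event_connected e y).

Lemma event_connected_mulr M N C :
  connected M N -> connected (mono_mul M C) (mono_mul N C).
Proof.
have mulA P i : mono_mul (mono_mul P (y i)) C = mono_mul (mono_mul P C) (y i).
  by apply/ffunP => k; rewrite !ffunE addnAC.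
elim=> [A B [[i [j [P [eij [-> ->]]]]]|[i [j [P [eij [-> ->]]]]]]|A|A B D _ IH1 _ IH2].
- by apply: rt_step; left; exists i, j, (mono_mul P C); rewrite !mulA.
- by apply: rt_step; right; exists i, j, (mono_mul P C); rewrite !mulA.
- exact: rt_refl.
- exact: rt_trans IH1 IH2.
Qed.

Lemma mono_eval_mul M N (x : 'rV[R]_s) :
  mono_eval (mono_mul M N) x = mono_eval M x * mono_eval N x.
Proof. by rewrite -big_split; apply: eq_bigr => k _; rewrite ffunE exprD. Qed.

Lemma event_connected_eval (x : 'rV[R]_s) M N :
  event_variety e y x -> connected M N -> mono_eval M x = mono_eval N x.
Proof.
move=> xV; elim=> [A B [] [i [j [P [eij [-> ->]]]]]|//|A B D _ -> _ ->] //;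
  by rewrite !mono_eval_mul (xV i j) // eij.
Qed.

Definition reaction_vector (p : 'I_n * 'I_n) (k : 'I_s) : int := (y p.1 k)%:Z - (y p.2 k)%:Z.

Definition reaction_comb (l : seq ('I_n * 'I_n)) (k : 'I_s) : int :=
  \sum_(p <- l) reaction_vector p k.

Definition reaction_dot (p : 'I_n * 'I_n) (c : 'I_s -> R) : R :=
  \sum_k (reaction_vector p k)%:~R * c k.

Definition reaction_orthogonal (c : 'I_s -> R) : Prop :=
  forall p, sym_edge e p.1 p.2 -> reaction_dot p c = 0.

Definition edge_pairs : seq ('I_n * 'I_n) :=
  [seq p <- enum {: 'I_n * 'I_n} | sym_edge e p.1 p.2].

Lemma mem_edge_pairs p : (p \in edge_pairs) = sym_edge e p.1 p.2.
Proof. by rewrite mem_filter mem_enum andbT. Qed.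

Lemma reaction_dot_swap p c : reaction_dot (p.2, p.1) c = - reaction_dot p c.
Proof.
by rewrite /reaction_dot -sumrN; apply: eq_bigr => k _; rewrite -mulNr -intrN opprB.
Qed.

Lemma reaction_orthogonal_ge0 c :
  (forall p, sym_edge e p.1 p.2 -> 0 <= reaction_dot p c) -> reaction_orthogonal c.
Proof.
move=> c_ge0 p pe; apply/eqP; rewrite eq_le c_ge0 // andbT -oppr_ge0 -reaction_dot_swap.
by apply: c_ge0; rewrite /sym_edge orbC.
Qed.

Lemma reaction_orthogonal_lin u w (a : R) :
  reaction_orthogonal u -> reaction_orthogonal w ->
  reaction_orthogonal (fun k => u k - a * w k).
Proof.
move=> u_orth w_orth p pe; move: (u_orth p pe) (w_orth p pe); rewrite /reaction_dot => u0 w0.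
under eq_bigr do rewrite mulrBr mulrCA.
by rewrite sumrB -mulr_sumr u0 w0 mulr0 subr0.
Qed.

Lemma mono_eval_expR M (c : 'I_s -> R) :
  mono_eval M (\row_k expR (c k)) = expR (\sum_k (M k)%:R * c k).
Proof. by rewrite expR_sum; apply: eq_bigr => k _; rewrite mxE expRM_natl. Qed.

Lemma expR_row_in_variety c :
  reaction_orthogonal c -> event_variety e y (\row_k expR (c k)).
Proof.
move=> c_orth i j eij; rewrite !mono_eval_expR; congr expR; apply/eqP.
rewrite -subr_eq0 -sumrB; apply/eqP; rewrite -[RHS](c_orth (i, j) eij).
by apply: eq_bigr => k _; rewrite -mulrBl /reaction_vector intrB -!pmulrn.
Qed.

Definition pos_part (v : 'I_s -> int) : {ffun 'I_s -> nat} :=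
  [ffun k => if 0 <= v k then absz (v k) else 0%N].

Definition neg_part (v : 'I_s -> int) : {ffun 'I_s -> nat} :=
  [ffun k => if v k < 0 then absz (v k) else 0%N].

Lemma pos_partB_neg_part v k : (pos_part v k)%:Z - (neg_part v k)%:Z = v k.
Proof. by rewrite !ffunE; case: (leP 0 (v k)) => /= v0; lia. Qed.

Section NonCatalytic.
Hypothesis noncat : ~ catalytic e y.

Lemma event_connected_cancel M N C :
  connected (mono_mul M C) (mono_mul N C) -> connected M N.
Proof.
move=> MNC.
pose A := mono_div_gcd (mono_mul M C) (mono_mul N C).
pose B := mono_div_gcd (mono_mul N C) (mono_mul M C).
pose G : {ffun 'I_s -> nat} := [ffun k => minn (M k) (N k)].
have -> : M = mono_mul A G.
  apply/ffunP => k; rewrite /A /G /mono_div_gcd /mono_mul !ffunE.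
  by rewrite -addn_minl subnDr subnK // geq_minl.
have -> : N = mono_mul B G.
  apply/ffunP => k; rewrite /B /G /mono_div_gcd /mono_mul !ffunE [minn (M k) _]minnC.
  by rewrite -addn_minl subnDr subnK // geq_minl.
apply: event_connected_mulr.
by apply: contra_notP noncat => not_conn; exists (mono_mul M C), (mono_mul N C).
Qed.

Lemma event_connected_reaction_comb l (M N : {ffun 'I_s -> nat}) :
  {in l, forall p, sym_edge e p.1 p.2} ->
  (forall k, (M k)%:Z - (N k)%:Z = reaction_comb l k) -> connected M N.
Proof.
elim: l M N => [|[i j] l IH] M N ledge MN.
  suff -> : M = N by apply: rt_refl.
  by apply/ffunP => k; apply/eqP; rewrite -eqz_nat -subr_eq0 MN /reaction_comb big_nil.
apply: (@event_connected_cancel _ _ (y j)).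
apply: (@rt_trans _ _ _ (mono_mul N (y i))).
  apply: IH => [p pl|k]; first by apply: ledge; rewrite inE pl orbT.
  move: (MN k); rewrite /reaction_comb big_cons /reaction_vector !ffunE /=; lia.
have /orP [eij|eji] := ledge _ (mem_head _ _).
  by apply: rt_step; left; exists i, j, N.
by apply: rt_step; right; exists j, i, N.
Qed.

Lemma event_connected_parts l : {in l, forall p, sym_edge e p.1 p.2} ->
  connected (pos_part (reaction_comb l)) (neg_part (reaction_comb l)).
Proof.
by move=> ledge; apply: (event_connected_reaction_comb ledge) => k; apply: pos_partB_neg_part.
Qed.

End NonCatalytic.
End EventGraph.

Lemma exists_expR_close (R : realType) (I : finType) (a u w : I -> R) (eps : R) :
  0 < eps -> (forall i, a i == 0 -> 0 < w i) -> (forall i, a i != 0 -> w i = 0) ->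
  (forall i, a i != 0 -> expR (u i) = a i) ->
  exists N : nat, forall i, `|a i - expR (u i - N%:R * w i)| < eps.
Proof.
move=> eps_gt0 w_gt0 w_eq0 u_exp.
pose bound := \sum_(i | a i == 0) `|(u i - ln eps) / w i|.
have bound_ge0 : 0 <= bound by apply: sumr_ge0.
exists (Num.Def.archi_bound bound) => i.
have [ai0|ai_neq0] := boolP (a i == 0); last first.
  by rewrite w_eq0 // mulr0 subr0 u_exp // subrr normr0.
rewrite (eqP ai0) sub0r normrN gtr0_norm ?expR_gt0 // -[eps]lnK ?posrE // ltr_expR.
have : (u i - ln eps) / w i < (Num.Def.archi_bound bound)%:R.
  apply: le_lt_trans (archi_boundP bound_ge0); apply: le_trans (ler_norm _) _.
  by rewrite /bound (bigD1 i) //= lerDl sumr_ge0.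
by rewrite ltr_pdivrMr ?w_gt0 //; lra.
Qed.

Section NonnegativePoint.
Variables (R : realType) (s n : nat) (e : rel 'I_n) (y : 'I_n -> {ffun 'I_s -> nat}).
Variable x : 'rV[R]_s.
Hypothesis x_ge0 : nonneg_orthant x.
Local Notation xs k := (x ord0 k).

Lemma mono_eval_eq0 (M : {ffun 'I_s -> nat}) k :
  xs k == 0 -> (0 < M k)%N -> mono_eval M x = 0.
Proof.
by move=> /eqP xk0 Mk_gt0; rewrite /mono_eval (bigD1 k) //= xk0 expr0n gtn_eqF // mul0r.
Qed.

Lemma mono_eval_gt0 (M : {ffun 'I_s -> nat}) :
  (forall k, (0 < M k)%N -> xs k != 0) -> 0 < mono_eval M x.
Proof.
move=> Mx; apply: prodr_gt0 => k _; have [Mk0|Mk_gt0] := posnP (M k).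
  by rewrite Mk0 expr0.
by apply: exprn_gt0; rewrite lt0r Mx // x_ge0.
Qed.

Lemma mono_eval_ln (M : {ffun 'I_s -> nat}) : (forall k, xs k == 0 -> M k = 0%N) ->
  mono_eval M x = expR (\sum_(k | xs k != 0) (M k)%:R * ln (xs k)).
Proof.
move=> M0; rewrite expR_sum /mono_eval (bigID (fun k => xs k == 0)) /=.
rewrite big1 ?mul1r => [|k /M0 ->]; last by rewrite expr0.
by apply: eq_bigr => k xk; rewrite expRM_natl lnK // posrE lt0r xk x_ge0.
Qed.

Hypothesis noncat : ~ catalytic e y.
Hypothesis xV : event_variety e y x.

(* Otherwise one side of the binomial identity given by [event_connected_parts] would
   vanish at [x] and the other would not. *)
Lemma reaction_comb_le0_eq0 l : {in l, forall p, sym_edge e p.1 p.2} ->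
  (forall k, xs k == 0 -> reaction_comb y l k <= 0) ->
  forall k, xs k == 0 -> reaction_comb y l k = 0.
Proof.
move=> ledge v_le0 k0 xk0; apply/eqP; rewrite eq_le v_le0 // leNgt; apply/negP => v_lt0.
have := event_connected_eval xV (event_connected_parts noncat ledge).
rewrite (@mono_eval_eq0 (neg_part _) k0) //; last by rewrite ffunE v_lt0 absz_gt0 lt_eqF.
apply/eqP; rewrite gt_eqF // mono_eval_gt0 // => k; rewrite ffunE.
case: ifP => // v_ge0; rewrite absz_gt0 => v_neq0; apply: contraNN v_neq0 => xk.
by rewrite eq_le v_le0 ?v_ge0.
Qed.

Lemma reaction_comb_ln l : {in l, forall p, sym_edge e p.1 p.2} ->
  (forall k, xs k == 0 -> reaction_comb y l k = 0) ->
  \sum_(k | xs k != 0) (reaction_comb y l k)%:~R * ln (xs k) = 0.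
Proof.
move=> ledge v0; have := event_connected_eval xV (event_connected_parts noncat ledge).
rewrite !mono_eval_ln => [|k xk|k xk]; rewrite ?ffunE ?v0 //.
move/expR_inj/eqP; rewrite -subr_eq0 -sumrB => /eqP parts0.
rewrite -[RHS]parts0; apply: eq_bigr => k _.
by rewrite -mulrBl -(pos_partB_neg_part (reaction_comb y l) k) intrB -!pmulrn.
Qed.

Lemma exists_drift : exists w : 'I_s -> R,
  [/\ forall k, xs k == 0 -> 0 < w k, forall k, xs k != 0 -> w k = 0
    & reaction_orthogonal e y w].
Proof.
(* The unknowns are the values of [w] on the zero coordinates of [x]: the rows [inl k]
   ask for [w k > 0], the rows [inr p] for orthogonality to the reaction vectors. *)
pose row (z : 'I_s + 'I_n * 'I_n) (i : 'I_s) : int :=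
  match z with inl k => (i == k)%:Z | inr p => if xs i == 0 then reaction_vector y p i else 0 end.
pose strict (z : 'I_s + 'I_n * 'I_n) := if z is inl _ then true else false.
pose sys := [seq inl k | k <- enum 'I_s & xs k == 0] ++ map inr (edge_pairs e).
have [[u usat]|[l [lsub lsum lref]]] := linear_alternative row (fun=> 0 : R) strict sys.
  exists (fun k => if xs k == 0 then u k else 0); split => [k xk|k /negbTE -> //|].
    have /usat : inl k \in sys by rewrite mem_cat map_f // mem_filter xk mem_enum.
    rewrite addr0 (bigD1 k) //= eqxx big1 ?addr0 ?mul1r ?xk // => i /negbTE ->.
    by rewrite mul0r.
  apply: reaction_orthogonal_ge0 => p pe.
  suff -> : reaction_dot y p (fun k => if xs k == 0 then u k else 0) =
      \sum_i (row (inr p) i)%:~R * u i.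
    have /usat : inr p \in sys by rewrite mem_cat map_f ?orbT // mem_edge_pairs.
    by rewrite addr0.
  by apply: eq_bigr => i _ /=; case: (xs i == 0); rewrite ?mulr0 ?mul0r.
(* A refutation adds some unit rows, at least one [inl k0], to reaction rows [lp] and
   sums to zero, so [reaction_comb y lp] is nonpositive on the zero coordinates. *)
move: lref; rewrite refuting0 => /hasP [[k0 k0l _|//]].
have xk0 : xs k0 == 0.
  move: (lsub _ k0l); rewrite mem_cat => /orP [/mapP [k1 + [->]]|/mapP [? _ //]].
  by rewrite mem_filter => /andP [].
pose lp := pmap (fun z => if z is inr p then Some p else None) l.
have lp_edge : {in lp, forall p, sym_edge e p.1 p.2}.
  move=> p; rewrite mem_pmap => /mapP [[//|q] /lsub + [->]].
  by rewrite mem_cat => /orP [/mapP [? _ //]|/mapP [q' + [->]]]; rewrite mem_edge_pairs.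
pose count k := \sum_(z <- l) (if z is inl k' then (k == k')%:Z else 0).
have lpE k : xs k == 0 -> reaction_comb y lp k = - count k.
  move=> xk; apply/eqP; rewrite -addr_eq0 addrC -(lsum k) /reaction_comb big_pmap -big_split.
  by apply/eqP/eq_bigr => -[k'|p] /=; rewrite ?addr0 ?add0r ?xk.
have count_gt0 : 0 < count k0.
  rewrite /count (big_rem _ k0l) /= eqxx ltr_pwDl ?sumr_ge0 // => -[k'|p] _ //.
suff /eqP : reaction_comb y lp k0 = 0 by rewrite lpE // oppr_eq0 gt_eqF.
apply: (reaction_comb_le0_eq0 lp_edge) xk0 => k xk.
by rewrite lpE // oppr_le0 sumr_ge0 // => -[k'|p] _.
Qed.

Lemma exists_orth_log : exists u : 'I_s -> R,
  (forall k, xs k != 0 -> expR (u k) = xs k) /\ reaction_orthogonal e y u.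
Proof.
(* The unknowns are the values of [u] on the zero coordinates of [x]; the others are
   fixed to [ln (xs k)] and enter the constants. *)
pose row p (i : 'I_s) : int := if xs i == 0 then reaction_vector y p i else 0.
pose cst p := \sum_(k | xs k != 0) (reaction_vector y p k)%:~R * ln (xs k).
have [[u usat]|[l [lsub lsum lref]]] := linear_alternative row cst (fun=> false) (edge_pairs e).
  exists (fun k => if xs k == 0 then u k else ln (xs k)); split => [k xk|].
    by rewrite (negbTE xk) lnK // posrE lt0r xk x_ge0.
  apply: reaction_orthogonal_ge0 => p pe.
  suff -> : reaction_dot y p (fun k => if xs k == 0 then u k else ln (xs k)) =
      \sum_i (row p i)%:~R * u i + cst p by apply: usat; rewrite mem_edge_pairs.
  rewrite /reaction_dot (bigID (fun k => xs k == 0)) /=; congr (_ + _).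
    rewrite [RHS](bigID (fun k => xs k == 0)) /= [X in _ = _ + X]big1 ?addr0.
      by apply: eq_bigr => k xk; rewrite /row xk.
    by move=> k /negbTE xk; rewrite /row xk mul0r.
  by apply: eq_bigr => k /negbTE xk; rewrite xk.
have lp_edge : {in l, forall p, sym_edge e p.1 p.2}.
  by move=> p /lsub; rewrite mem_edge_pairs.
move: lref; rewrite /refuting has_pred0; suff -> : \sum_(p <- l) cst p = 0 by rewrite ltxx.
rewrite exchange_big /= -[RHS](reaction_comb_ln lp_edge) => [|k xk].
  by apply: eq_bigr => k _; rewrite /reaction_comb rmorph_sum mulr_suml.
by rewrite -[RHS](lsum k); apply: eq_bigr => p _; rewrite /row xk.
Qed.

Lemma nonneg_point_in_closure : closure (event_variety e y `&` @pos_orthant R s) x.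
Proof.
have [w [w_gt0 w_eq0 w_orth]] := exists_drift.
have [u [u_exp u_orth]] := exists_orth_log.
move=> B /nbhs_ballP [eps eps_gt0 epsB].
have [N close] := exists_expR_close eps_gt0 w_gt0 w_eq0 u_exp.
exists (\row_k expR (u k - N%:R * w k)); split; first split.
- exact/expR_row_in_variety/reaction_orthogonal_lin.
- by move=> k; rewrite mxE expR_gt0.
- apply: epsB; split => // i j; rewrite (ord1 i) -ball_normE /= mxE; exact: close.
Qed.

End NonnegativePoint.

Theorem lemma4p8 (R : realType) (s n : nat) (e : rel 'I_n)
    (y : 'I_n -> {ffun 'I_s -> nat}) :
  (0 < s)%N -> (0 < n)%N -> injective y ->
  weakly_reversible e -> ~ catalytic e y ->
  @event_variety R s n e y `&` @nonneg_orthant R s `<=`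
    closure (@event_variety R s n e y `&` @pos_orthant R s).
Proof.
move=> _ _ _ _ noncat x [xV x_ge0].
exact: nonneg_point_in_closure.
Qed.
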